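(* Let $d\ge1$ and for $k=1,2$ let $(\boldsymbol X_k,Y_k)=(X_{k,1},\ldots,X_{k,d},Y_k)$ be a random vector with continuous marginals and $(d+1)$-dimensional copula $C_k$. Fix $\boldsymbol{\alpha}\in[0,1)^d$ with $C_k(\boldsymbol\alpha,1)<1$, and set $l_{\boldsymbol\alpha}(v)=\dfrac{v-C_1(\boldsymbol\alpha,v)}{v-C_2(\boldsymbol\alpha,v)}$. Suppose at least one of $C_1,C_2$ is $\mathrm{LTD}^1_{d+1}$ and $l_{\boldsymbol\alpha}(v)\ge l_{\boldsymbol\alpha}(1)$ for all $v\in(0,1]$. (i) If $Y_1\le_{\rm disp}Y_2$, then $\Delta\mathrm{VCoVaR}_{\boldsymbol\alpha,\beta}(Y_1|\boldsymbol X_1)\le\Delta\mathrm{VCoVaR}_{\boldsymbol\alpha,\beta}(Y_2|\boldsymbol X_2)$ for all $\beta\in(0,1)$. (ii) If $Y_1\le_\star Y_2$, then $\Delta^R\mathrm{VCoVaR}_{\boldsymbol\alpha,\beta}(Y_1|\boldsymbol X_1)\le\Delta^R\mathrm{VCoVaR}_{\boldsymbol\alpha,\beta}(Y_2|\boldsymbol X_2)$ for all $\beta\in(0,1)$.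
   Context: $C(\boldsymbol{\alpha},v)=C(\alpha_1,\ldots,\alpha_d,v)$. $F^{-1}(t)=\inf\{x:F(x)\ge t\}$, $\mathrm{VaR}_t(Z)=F_Z^{-1}(t)$. $\mathrm{VCoVaR}_{\boldsymbol\alpha,\beta}(Y_k|\boldsymbol X_k)$ is the $\beta$-quantile of the conditional distribution of $Y_k$ given $\{\exists\, i: X_{k,i}>\mathrm{VaR}_{\alpha_i}(X_{k,i})\}$. $\Delta\mathrm{VCoVaR}_{\boldsymbol\alpha,\beta}(Y|\boldsymbol X)=\mathrm{VCoVaR}_{\boldsymbol\alpha,\beta}(Y|\boldsymbol X)-\mathrm{VaR}_\beta(Y)$ and $\Delta^R\mathrm{VCoVaR}_{\boldsymbol\alpha,\beta}(Y|\boldsymbol X)=\Delta\mathrm{VCoVaR}_{\boldsymbol\alpha,\beta}(Y|\boldsymbol X)/\mathrm{VaR}_\beta(Y)$. A $(d+1)$-dimensional copula $C$ is $\mathrm{LTD}^1_{d+1}$ if, for $(U_1,\ldots,U_d,V)\sim C$, $P(U_1\le u_1,\ldots,U_d\le u_d\mid V\le v)$ is nonincreasing in $v$ for all $u_1,\ldots,u_d$ (i.e. $C(u_1,\ldots,u_d,v)/v$ is nonincreasing in $v$). Orders: $Y_1\le_{\rm disp}Y_2$ if $F_{Y_1}^{-1}(v)-F_{Y_1}^{-1}(u)\le F_{Y_2}^{-1}(v)-F_{Y_2}^{-1}(u)$ for all $0<u\le v<1$; $Y_1\le_\star Y_2$ if $F_{Y_2}^{-1}(u)/F_{Y_1}^{-1}(u)$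 is increasing in $u\in(0,1)$. *)

From HB Require Import structures.
From mathcomp Require Import all_boot all_order all_algebra.
From mathcomp Require Import all_classical all_reals all_analysis.

Set Implicit Arguments.
Unset Strict Implicit.
Unset Printing Implicit Defensive.

Import Order.TTheory GRing.Theory Num.Theory numFieldNormedType.Exports.
Local Open Scope classical_set_scope.
Local Open Scope ring_scope.

Definition Fdist (d0 : measure_display) (T : measurableType d0) (R : realType)
  (P : probability T R) (Z : {RV P >-> R}) (y : R) : R := fine (cdf Z y).

(* Generalized inverse F^{-1}(t) = inf {x : F x >= t}, in the extended reals
   (so that F^{-1}(0) = -oo). *)
Definition qinvE (R : realType) (F : R -> R) (t : R) : \bar R :=
  ereal_inf [set x%:E | x in [set x : R | t <= F x]].

(* Real-valued version (finite for t in (0,1) when F is a distribution fn). *)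
Definition qinv (R : realType) (F : R -> R) (t : R) : R := fine (qinvE F t).

Definition VaRE (d0 : measure_display) (T : measurableType d0) (R : realType)
  (P : probability T R) (Z : {RV P >-> R}) (t : R) : \bar R :=
  qinvE (Fdist Z) t.
Definition VaR (d0 : measure_display) (T : measurableType d0) (R : realType)
  (P : probability T R) (Z : {RV P >-> R}) (t : R) : R :=
  qinv (Fdist Z) t.

Definition vevent (d0 : measure_display) (T : measurableType d0) (R : realType)
  (P : probability T R) (n : nat) (X : 'I_n -> {RV P >-> R}) (alpha : 'I_n -> R)
  : set T :=
  [set w | exists i, (VaRE (X i) (alpha i) < (X i w)%:E)%E].

Definition cond_cdf (d0 : measure_display) (T : measurableType d0) (R : realType)
  (P : probability T R) (E : set T) (Y : {RV P >-> R}) (y : R) : R :=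
  fine (P ([set w | Y w <= y] `&` E)) / fine (P E).

Definition VCoVaR (d0 : measure_display) (T : measurableType d0) (R : realType)
  (P : probability T R) (n : nat) (X : 'I_n -> {RV P >-> R}) (Y : {RV P >-> R})
  (alpha : 'I_n -> R) (beta : R) : R :=
  qinv (cond_cdf (vevent X alpha) Y) beta.

Definition DVCoVaR (d0 : measure_display) (T : measurableType d0) (R : realType)
  (P : probability T R) (n : nat) (X : 'I_n -> {RV P >-> R}) (Y : {RV P >-> R})
  (alpha : 'I_n -> R) (beta : R) : R :=
  VCoVaR X Y alpha beta - VaR Y beta.

Definition DRVCoVaR (d0 : measure_display) (T : measurableType d0) (R : realType)
  (P : probability T R) (n : nat) (X : 'I_n -> {RV P >-> R}) (Y : {RV P >-> R})
  (alpha : 'I_n -> R) (beta : R) : R :=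
  DVCoVaR X Y alpha beta / VaR Y beta.

Definition in01 (R : realType) (t : R) : Prop := 0 <= t <= 1.

(* An n-dimensional copula (only its values on [0,1]^n matter):
   grounded, uniform one-dimensional margins, n-increasing. *)
Definition is_copula (R : realType) (n : nat) (C : ('I_n -> R) -> R) : Prop :=
  [/\ (forall u : 'I_n -> R, (forall i, in01 (u i)) ->
         (exists i, u i = 0) -> C u = 0),
      (forall (i : 'I_n) (t : R), in01 t ->
         C (fun j => if j == i then t else 1) = t) &
      (forall a b : 'I_n -> R, (forall i, in01 (a i)) -> (forall i, in01 (b i)) ->
         (forall i, a i <= b i) ->
         0 <= \sum_(S : {set 'I_n}) (-1) ^+ #|S| *
                 C (fun i => if i \in S then a i else b i))].

(* C(alpha_1,...,alpha_d, v) for a (d+1)-dimensional C *)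
Definition Cav (R : realType) (d : nat) (C : ('I_d.+1 -> R) -> R)
  (a : 'I_d -> R) (v : R) : R :=
  C (fun i => if unlift ord_max i is Some j then a j else v).

Definition copula_of (d0 : measure_display) (T : measurableType d0) (R : realType)
  (P : probability T R) (d : nat) (X : 'I_d -> {RV P >-> R}) (Y : {RV P >-> R})
  (C : ('I_d.+1 -> R) -> R) : Prop :=
  is_copula C /\
  forall (x : 'I_d -> R) (y : R),
    fine (P [set w | (forall i, X i w <= x i) /\ Y w <= y]) =
    Cav C (fun i => Fdist (X i) (x i)) (Fdist Y y).

Definition LTD1 (R : realType) (d : nat) (C : ('I_d.+1 -> R) -> R) : Prop :=
  forall u : 'I_d -> R, (forall i, in01 (u i)) ->
  forall v v' : R, 0 < v -> v <= v' -> v' <= 1 ->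
    Cav C u v' / v' <= Cav C u v / v.

Definition l_alpha (R : realType) (d : nat) (C1 C2 : ('I_d.+1 -> R) -> R)
  (a : 'I_d -> R) (v : R) : R :=
  (v - Cav C1 a v) / (v - Cav C2 a v).

Definition disp_le (R : realType) (F1 F2 : R -> R) : Prop :=
  forall u v : R, 0 < u -> u <= v -> v < 1 ->
    qinv F1 v - qinv F1 u <= qinv F2 v - qinv F2 u.

(* star order; quantile functions are required positive on (0,1) so that the
   ratio is meaningful (star order is an order on positive variables). *)
Definition star_le (R : realType) (F1 F2 : R -> R) : Prop :=
  (forall u : R, 0 < u < 1 -> 0 < qinv F1 u /\ 0 < qinv F2 u) /\
  (forall u v : R, 0 < u -> u <= v -> v < 1 ->
    qinv F2 u / qinv F1 u <= qinv F2 v / qinv F1 v).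

(* Sklar's representation turns the conditioning event
   {exists i, X_i > VaR_{alpha_i}(X_i)} into the complement of the lower orthant
   {U <= alpha}, so the conditional distribution function of Y given it is
   h (F_Y y) with h v = (v - C(alpha, v)) / (1 - C(alpha, 1)).  A copula is
   nondecreasing and 1-Lipschitz in each coordinate, so h is a continuous
   nondecreasing reparametrization of [0, 1] and VCoVaR = F_Y^{-1}(g) for the
   least g with h g = beta.  The hypothesis on l_alpha says h_2 <= h_1, whence
   g_1 <= g_2, and LTD of either copula gives h <= id, whence beta <= g_2.  The
   dispersive (resp. star) order then compares F^{-1}(g) - F^{-1}(beta)
   (resp. F^{-1}(g) / F^{-1}(beta)) across the two models. *)

From HB Require Import structures.
From mathcomp Require Import all_boot all_order all_algebra.
From mathcomp Require Import all_classical all_reals all_analysis.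
From mathcomp Require Import ring lra.

Set Implicit Arguments.
Unset Strict Implicit.
Unset Printing Implicit Defensive.

Import Order.TTheory GRing.Theory Num.Theory numFieldNormedType.Exports.
Local Open Scope classical_set_scope.
Local Open Scope ring_scope.

Section ContinuousCdf.
Variable R : realType.
Implicit Types (F h : R -> R) (t x y : R).

Definition continuous_cdf F :=
  [/\ continuous F, {homo F : x y / x <= y}, (forall y, 0 <= F y <= 1),
      (forall t, 0 < t -> exists a, F a < t) &
      (forall t, t < 1 -> exists b, t < F b)].

Lemma nbhs_exists_lt x (P : R -> Prop) :
  (\forall z \near x, P z) -> exists2 z, z < x & P z.
Proof.
move=> Px; have [z [zx Pz]] : exists z, z < x /\ P z.
  apply: (@filter_ex _ _ (at_left_proper_filter x)); near=> z; split.
  - by near: z; exact: nbhs_left_lt.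
  - by near: z; apply: filterS Px => z Pz _.
by exists z.
Unshelve. all: by end_near. Qed.

Lemma nbhs_exists_gt x (P : R -> Prop) :
  (\forall z \near x, P z) -> exists2 z, x < z & P z.
Proof.
move=> Px; have [z [xz Pz]] : exists z, x < z /\ P z.
  apply: (@filter_ex _ _ (at_right_proper_filter x)); near=> z; split.
  - by near: z; exact: nbhs_right_gt.
  - by near: z; apply: filterS Px => z Pz _.
by exists z.
Unshelve. all: by end_near. Qed.

(* The infimum [x] of the closed up-set [{y | t <= F y}] satisfies [F x = t]
   by continuity from both sides. *)
Lemma qinvP F t : continuous F -> {homo F : x y / x <= y} ->
  (exists a, F a < t) -> (exists b, t < F b) ->
  exists x, [/\ qinvE F t = x%:E, F x = t & forall y, (t <= F y) = (x <= y)].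
Proof.
move=> cF mF [a Fa] [b Fb].
pose S := [set y | t <= F y].
have lbS : lbound S a.
  by move=> y Sy; rewrite leNgt; apply/negP => /ltW/mF; rewrite /S /= in Sy; lra.
have hlbS : has_lbound S by exists a.
have S0 : S !=set0 by exists b; exact: ltW.
set x := inf S.
have below y : y < x -> F y < t.
  by move=> yx; rewrite ltNge; apply/negP => /(ge_inf hlbS); rewrite -/x; lra.
have above y : x < y -> t <= F y.
  by move=> /(inf_lt S0) [s Ss /ltW/mF]; exact: le_trans.
have Fx : F x = t.
  apply/eqP; rewrite eq_le; apply/andP; split; rewrite leNgt; apply/negP.
  - move=> /(cvgr_gt _ (cF x)) /nbhs_exists_lt [z /below]; lra.
  - move=> /(cvgr_lt _ (cF x)) /nbhs_exists_gt [z /above]; lra.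
exists x; split => //; first by rewrite /qinvE ereal_inf_EFin.
move=> y; apply/idP/idP => [ty|/mF]; last by rewrite Fx.
by rewrite leNgt; apply/negP => /below; lra.
Qed.

Lemma qinv_continuous_cdfP F t : continuous_cdf F -> 0 < t < 1 ->
  [/\ qinvE F t = (qinv F t)%:E, F (qinv F t) = t &
      forall y, (t <= F y) = (qinv F t <= y)].
Proof.
case=> cF mF _ lo hi /andP[t0 t1].
have [x [qx Fx tFx]] := qinvP cF mF (lo t t0) (hi t t1).
by rewrite /qinv qx.
Qed.

Lemma qinv_continuous_cdf_le F s t : continuous_cdf F ->
  0 < s -> s <= t -> t < 1 -> qinv F s <= qinv F t.
Proof.
move=> cdfF s0 st t1.
have s01 : 0 < s < 1 by rewrite s0 (le_lt_trans st t1).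
have t01 : 0 < t < 1 by rewrite (lt_le_trans s0 st) t1.
have [_ _ <-] := qinv_continuous_cdfP cdfF s01.
by have [_ -> _] := qinv_continuous_cdfP cdfF t01.
Qed.

Lemma qinvE0 F : (forall x, 0 <= F x) -> qinvE F 0 = -oo%E.
Proof.
move=> F0; rewrite /qinvE (_ : [set x | 0 <= F x] = setT) ?ereal_inf_real //.
by apply/seteqP; split => x //= _; exact: F0.
Qed.

Lemma continuous_of_dist_le F h K : continuous F -> 0 < K ->
  (forall y z, `|h y - h z| <= K * `|F y - F z|) -> continuous h.
Proof.
move=> cF K0 hF x; apply/(@cvgrPdist_lt _ R^o _ _ (nbhs_filter x)) => e e0.
have : \forall z \near x, `|F x - F z| < e / K.
  by move: (cF x) => /(@cvgrPdist_lt _ R^o _ _ (nbhs_filter x)); apply; exact: divr_gt0.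
apply: filterS => z Fxz; apply: le_lt_trans (hF x z) _.
by rewrite -ltr_pdivlMl // mulrC.
Qed.

Section Reparametrization.
Variables (h : R -> R) (K : R).
Hypotheses (K0 : 0 < K) (h0 : h 0 = 0) (h1 : h 1 = 1).
Hypothesis h_incr : forall v v', 0 <= v -> v <= v' -> v' <= 1 ->
  0 <= h v' - h v <= K * (v' - v).

Lemma continuous_cdf_comp F : continuous_cdf F -> continuous_cdf (h \o F).
Proof.
case=> cF mF F01 lo hi.
have incr y z : F y <= F z -> 0 <= h (F z) - h (F y) <= K * (F z - F y).
  move=> Fyz; case/andP: (F01 y) => Fy0 _; case/andP: (F01 z) => _ Fz1.
  exact: h_incr.
split => /=.
- apply: (continuous_of_dist_le cF K0) => y z.
  have [Fyz|/ltW Fzy] := leP (F y) (F z).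
  + have /andP[hyz Kyz] := incr _ _ Fyz.
    by rewrite distrC [`|F y - F z|]distrC !ger0_norm // subr_ge0.
  + have /andP[hzy Kzy] := incr _ _ Fzy.
    by rewrite !ger0_norm // subr_ge0.
- by move=> y z /mF /incr /andP[hyz _]; rewrite -subr_ge0.
- move=> y /=; case/andP: (F01 y) => Fy0 Fy1.
  have /andP[hy0 _] := h_incr (lexx 0) Fy0 Fy1; have /andP[hy1 _] := h_incr Fy0 Fy1 (lexx 1).
  rewrite h0 subr0 in hy0; rewrite h1 in hy1; apply/andP; split; lra.
- move=> t t0; have [a Fa] := lo _ (divr_gt0 t0 K0); exists a => /=.
  case/andP: (F01 a) => Fa0 Fa1; have /andP[_] := h_incr (lexx 0) Fa0 Fa1.
  rewrite h0 !subr0 => hFa; rewrite ltr_pdivlMr // in Fa; lra.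
- move=> t t1; have t1K : 1 - (1 - t) / K < 1 by rewrite gtrDl oppr_lt0 divr_gt0 // subr_gt0.
  have [b Fb] := hi _ t1K; exists b => /=.
  case/andP: (F01 b) => Fb0 Fb1; have /andP[_] := h_incr Fb0 Fb1 (lexx 1).
  rewrite h1 => hFb.
  have : (1 - F b) * K < 1 - t by rewrite -ltr_pdivlMr //; lra.
  lra.
Qed.

Lemma qinv_comp F beta : continuous_cdf F -> 0 < beta < 1 ->
  exists g, [/\ 0 < g < 1, h g = beta, qinv (h \o F) beta = qinv F g &
    forall v, 0 < v < 1 -> beta <= h v -> g <= v].
Proof.
move=> cdfF b01; have [_ mF F01 _ _] := cdfF.
have [_ Gx Gle] := qinv_continuous_cdfP (continuous_cdf_comp cdfF) b01.
set x := qinv (h \o F) beta in Gx Gle *; rewrite /= in Gx.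
have g01 : 0 < F x < 1.
  case/andP: b01 (F01 x) => b0 b1 /andP[Fx0 Fx1].
  rewrite !lt_neqAle Fx0 Fx1 !andbT; apply/andP; split; apply/eqP => Fx.
  - by move: Gx; rewrite -Fx h0; lra.
  - by move: Gx; rewrite Fx h1; lra.
have [_ Fq Fle] := qinv_continuous_cdfP cdfF g01.
have qx : qinv F (F x) = x.
  by apply/eqP; rewrite eq_le -Fle lexx -Gle /= Fq Gx lexx.
exists (F x); split; [by [] | by [] | by rewrite qx | move=> v v01 bv].
have [_ Fv _] := qinv_continuous_cdfP cdfF v01.
by rewrite -Fv; apply: mF; rewrite -Gle /= Fv.
Qed.

End Reparametrization.

End ContinuousCdf.

Section DistributionFunction.
Context d0 (T : measurableType d0) (R : realType) (P : probability T R).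
Implicit Types (Z : {RV P >-> R}) (y : R).

Lemma measurable_RV_le Z y : measurable [set w | Z w <= y].
Proof.
have := @measurable_funP _ _ _ _ setT Z measurableT _ (@measurable_itv _ `]-oo, y]).
by rewrite setTI; congr measurable; apply/seteqP; split => w /=; rewrite in_itv.
Qed.

Lemma FdistE Z y : Fdist Z y = fine (P [set w | Z w <= y]).
Proof. by []. Qed.

Lemma Fdist_ge0 Z y : 0 <= Fdist Z y.
Proof. by rewrite /Fdist fine_ge0 ?cdf_ge0. Qed.

Lemma cdf_fin_num Z y : cdf Z y \is a fin_num.
Proof. by rewrite ge0_fin_numE ?cdf_ge0// (le_lt_trans (cdf_le1 _ _)) ?ltry. Qed.

Lemma Fdist_le1 Z y : Fdist Z y <= 1.
Proof. by rewrite /Fdist -lee_fin fineK ?cdf_le1 ?cdf_fin_num. Qed.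

Lemma Fdist_nondecreasing Z : {homo Fdist Z : x y / x <= y}.
Proof. by move=> x y xy; rewrite fine_le ?cdf_fin_num ?cdf_nondecreasing. Qed.

Lemma Fdist_exists_lt Z t : 0 < t -> exists a, Fdist Z a < t.
Proof.
move=> t0; have FNy : Fdist Z x @[x --> -oo%R] --> (0:R) by exact: fine_cvg (cvg_cdfNy0 Z).
have [M [_ HM]] : \forall y \near -oo, Fdist Z y < t by exact: (cvgr_lt _ FNy).
by exists (M - 1); apply: HM; lra.
Qed.

Lemma Fdist_exists_gt Z t : t < 1 -> exists b, t < Fdist Z b.
Proof.
move=> t1; have Fy : Fdist Z x @[x --> +oo%R] --> (1:R) by exact: fine_cvg (cvg_cdfy1 Z).
have [M [_ HM]] : \forall y \near +oo, t < Fdist Z y by exact: (cvgr_gt _ Fy).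
by exists (M + 1); apply: HM; lra.
Qed.

Lemma Fdist_continuous_cdf Z : continuous (Fdist Z) -> continuous_cdf (Fdist Z).
Proof.
split => //; [exact: Fdist_nondecreasing | | exact: Fdist_exists_lt | exact: Fdist_exists_gt].
by move=> y; rewrite Fdist_ge0 Fdist_le1.
Qed.

End DistributionFunction.

Section Subsets.
Local Close Scope classical_set_scope.
Local Open Scope set_scope.

Lemma sum_subsets_pair (T : finType) (V : nmodType) (f : {set T} -> V) (j l : T) :
  j != l -> (forall S : {set T}, ~~ (S \subset [set j; l]) -> f S = 0) ->
  \sum_S f S = f finset.set0 + f [set j] + f [set l] + f [set j; l].
Proof.
move=> jl f0.
rewrite (bigID (fun S : {set T} => S \subset [set j; l])) /=.
rewrite [X in _ + X]big1 ?addr0; last by move=> S /f0.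
pose mk (b : bool * bool) : {set T} :=
  (if b.1 then [set j] else finset.set0) :|: (if b.2 then [set l] else finset.set0).
rewrite (reindex_onto mk (fun S : {set T} => (j \in S, l \in S))) /=; last first.
  move=> S /fintype.subsetP sS; apply/setP => k; rewrite /mk /= !inE.
  apply/idP/idP => [|kS]; last first.
    by case/set2P: (sS k kS) => ek; rewrite -ek kS !inE eqxx ?orbT.
  case: (boolP (j \in S)) => jS; case: (boolP (l \in S)) => lS; rewrite !inE //=.
  - by case/orP => /eqP ->.
  - by rewrite orbF => /eqP ->.
  - by move=> /eqP ->.
rewrite (eq_bigl xpredT); last first.
  have lj : l != j by rewrite eq_sym.
  case=> -[] []; rewrite /mk /= ?finset.set0U ?finset.setU0.
  all: rewrite ?inE ?eqxx ?(negbTE jl) ?(negbTE lj) ?andbT.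
  - exact: fintype.subxx.
  - exact: finset.subsetUl.
  - exact: finset.subsetUr.
  - exact: finset.sub0set.
rewrite (eq_bigr (fun b => f (mk (b.1, b.2)))); last by case.
rewrite -(pair_bigA _ (fun b1 b2 => f (mk (b1, b2)))) /= !big_bool /= /mk /=.
rewrite ?finset.set0U ?finset.setU0.
by rewrite -addrA [RHS]addrC; congr (_ + _); rewrite addrA addrC addrA.
Qed.

End Subsets.

Section Copula.
Variable R : realType.

Lemma in01_0 : in01 (0 : R). Proof. by rewrite /in01 lexx ler01. Qed.
Lemma in01_1 : in01 (1 : R). Proof. by rewrite /in01 ler01 lexx. Qed.

Lemma copula_2increasing n (C : ('I_n -> R) -> R) (x : 'I_n -> R) (j l : 'I_n)
    (sj tj sl tl : R) :
  is_copula C -> j != l -> (forall i, in01 (x i)) ->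
  in01 sj -> in01 tj -> in01 sl -> in01 tl -> sj <= tj -> sl <= tl ->
  C [eta x with j |-> tj, l |-> sl] - C [eta x with j |-> sj, l |-> sl] <=
  C [eta x with j |-> tj, l |-> tl] - C [eta x with j |-> sj, l |-> tl].
Proof.
move=> [grounded _ increasing] jl x01 sj01 tj01 sl01 tl01 stj stl.
have lj : l != j by rewrite eq_sym.
pose a := [eta (fun=> 0) with j |-> sj, l |-> sl].
pose b := [eta x with j |-> tj, l |-> tl].
have a01 i : in01 (a i) by rewrite /a /=; do 2!case: ifP => _ //; exact: in01_0.
have b01 i : in01 (b i) by rewrite /b /=; do 2!case: ifP => _ //.
have ab i : a i <= b i.
  by rewrite /a /b /=; do 2!case: ifP => _ //; case/andP: (x01 i).
pose f (S : {set 'I_n}) := (-1) ^+ #|S| * C (fun i => if i \in S then a i else b i).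
have := increasing a b a01 b01 ab.
rewrite -/(\sum_(S : {set 'I_n}) f S) (sum_subsets_pair (f := f) jl); last first.
  move=> S /fintype.subsetPn [k kS]; rewrite !inE negb_or => /andP[kj kl].
  rewrite /f grounded ?mulr0 //; first by move=> i; case: ifP.
  by exists k; rewrite kS /a /= (negbTE kj) (negbTE kl).
have vertexE (S : {set 'I_n}) : S \subset [set j; l]%SET ->
    (fun i => if i \in S then a i else b i) =
    [eta x with j |-> if j \in S then sj else tj, l |-> if l \in S then sl else tl].
  move=> /fintype.subsetP Sjl; apply: funext => i /=.
  case: eqP => [->|/eqP ij]; first by rewrite /a /b /= ?eqxx; case: ifP.
  case: eqP => [->|/eqP il]; first by rewrite /a /b /= ?(negbTE lj) ?eqxx; case: ifP.
  have iS : i \notin S by apply/negP => /Sjl; rewrite !inE (negbTE ij) (negbTE il).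
  by rewrite (negbTE iS) /b /= ?(negbTE ij) ?(negbTE il).
rewrite /f cards0 !cards1 cards2 jl expr0 expr1 expr2 mulrNN !mul1r mulN1r.
rewrite !vertexE ?finset.sub0set ?finset.subsetUl ?finset.subsetUr ?fintype.subxx //.
rewrite !inE !eqxx (negbTE jl) (negbTE lj) /= mulN1r; lra.
Qed.

Lemma Cav_with d (C : ('I_d.+1 -> R) -> R) (u : 'I_d -> R) (v : R) k a w :
  C [eta (fun i => if unlift ord_max i is Some j then u j else v)
       with lift ord_max k |-> a, ord_max |-> w] = Cav C [eta u with k |-> a] w.
Proof.
congr C; apply: funext => i /=.
case: (unliftP ord_max i) => [k' ->|->].
  by rewrite (inj_eq lift_inj) [_ == ord_max]eq_sym (negbTE (neq_lift _ _)) ?liftK; case: eqP.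
by rewrite eqxx; case: eqP => // /eqP; rewrite (negbTE (neq_lift _ _)).
Qed.

Section CavLast.
Variables (d : nat) (C : ('I_d.+1 -> R) -> R).
Hypothesis copC : is_copula C.
Implicit Types (u : 'I_d -> R) (v w : R).

Lemma Cav_grounded u v : (forall k, in01 (u k)) -> in01 v ->
  (exists k, u k = 0) \/ v = 0 -> Cav C u v = 0.
Proof.
case: copC => grounded _ _ u01 v01 zero; apply: grounded.
  by move=> i; case: unlift.
case: zero => [[k uk0]|->]; first by exists (lift ord_max k); rewrite liftK.
by exists ord_max; rewrite unlift_none.
Qed.

Lemma Cav1 v : in01 v -> Cav C (fun=> 1) v = v.
Proof.
case: copC => _ margin _ v01; rewrite -[RHS](margin ord_max v v01); congr C.
apply: funext => i; case: (unliftP ord_max i) => [k ->|->]; last by rewrite ?unlift_none eqxx.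
by rewrite ?liftK [_ == ord_max]eq_sym (negbTE (neq_lift _ _)).
Qed.

Lemma Cav_step u k a v w : (forall k, in01 (u k)) -> in01 a -> u k <= a ->
  0 <= v -> v <= w -> w <= 1 ->
  Cav C u w - Cav C u v <= Cav C [eta u with k |-> a] w - Cav C [eta u with k |-> a] v.
Proof.
move=> u01 a01 uka v0 vw w1.
have v01 : in01 v by rewrite /in01 v0 (le_trans vw w1).
have w01 : in01 w by rewrite /in01 (le_trans v0 vw) w1.
have ext01 i : in01 (if unlift ord_max i is Some j then u j else v) by case: unlift.
have kmax : lift ord_max k != ord_max by rewrite eq_sym neq_lift.
have := copula_2increasing copC kmax ext01 (u01 k) a01 v01 w01 uka vw.
have uk : [eta u with k |-> u k] = u :> ('I_d -> R).
  by apply: funext => k' /=; case: eqP => [->|].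
rewrite !Cav_with uk; lra.
Qed.

Lemma Cav_increment_le u u' v w : (forall k, in01 (u k)) -> (forall k, in01 (u' k)) ->
  (forall k, u k <= u' k) -> 0 <= v -> v <= w -> w <= 1 ->
  Cav C u w - Cav C u v <= Cav C u' w - Cav C u' v.
Proof.
move=> u01 u'01 uu' v0 vw w1.
pose mid (m : nat) (k : 'I_d) := if (k < m)%N then u' k else u k.
have mid01 m k : in01 (mid m k) by rewrite /mid; case: ifP.
suff : forall m, (m <= d)%N -> Cav C u w - Cav C u v <= Cav C (mid m) w - Cav C (mid m) v.
  have -> : u' = mid d by apply: funext => k; rewrite /mid ltn_ord.
  by apply.
elim=> [_|m IH md].
  by have -> : mid 0%N = u by apply: funext => k; rewrite /mid ltn0.
apply: le_trans (IH (ltnW md)) _.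
have -> : mid m.+1 = [eta mid m with Ordinal md |-> u' (Ordinal md)].
  apply: funext => k /=; rewrite /mid ltnS leq_eqVlt -[k == _](inj_eq val_inj) /=.
  by case: eqP => // km; congr u'; apply: val_inj.
by apply: Cav_step => //; rewrite /mid ltnn.
Qed.

Lemma Cav_lipschitz u v w : (forall k, in01 (u k)) -> 0 <= v -> v <= w -> w <= 1 ->
  Cav C u w - Cav C u v <= w - v.
Proof.
move=> u01 v0 vw w1.
have := Cav_increment_le u01 (fun=> in01_1) (fun k => proj2 (andP (u01 k))) v0 vw w1.
by rewrite !Cav1 // /in01 ?v0 ?(le_trans vw w1) ?(le_trans v0 vw) ?w1.
Qed.

Lemma Cav_nondecreasing u v w : (0 < d)%N -> (forall k, in01 (u k)) ->
  0 <= v -> v <= w -> w <= 1 -> Cav C u v <= Cav C u w.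
Proof.
move=> d0 u01 v0 vw w1; pose k0 := Ordinal d0.
have v01 : in01 v by rewrite /in01 v0 (le_trans vw w1).
have w01 : in01 w by rewrite /in01 (le_trans v0 vw) w1.
pose u0 := [eta u with k0 |-> 0].
have u001 k : in01 (u0 k) by rewrite /u0 /=; case: eqP => // _; exact: in01_0.
have u0u k : u0 k <= u k by rewrite /u0 /=; case: eqP => // ->; case/andP: (u01 k0).
have := Cav_increment_le u001 u01 u0u v0 vw w1.
by rewrite !(Cav_grounded u001) ?subrr ?subr_ge0 //; left; exists k0; rewrite /u0 /= ?eqxx.
Qed.

End CavLast.

(* [P(V <= v | exists i, U_i > a_i)] for [(U, V)] with copula [C]. *)
Definition cond_copula_cdf d (C : ('I_d.+1 -> R) -> R) (a : 'I_d -> R) (v : R) :=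
  (v - Cav C a v) / (1 - Cav C a 1).

Section CondCopulaCdf.
Variables (d : nat) (C : ('I_d.+1 -> R) -> R) (a : 'I_d -> R).
Hypotheses (copC : is_copula C) (a01 : forall k, in01 (a k)) (Ca1 : Cav C a 1 < 1).
Local Notation h := (cond_copula_cdf C a).

Lemma Cav_le_id v : 0 <= v <= 1 -> Cav C a v <= v.
Proof.
case/andP=> v0 v1; have := Cav_lipschitz copC a01 (lexx 0) v0 v1.
by rewrite (Cav_grounded copC (v := 0)) ?subr0 //; [exact: in01_0 | right].
Qed.

Lemma cond_copula_cdf0 : h 0 = 0.
Proof.
by rewrite /cond_copula_cdf (Cav_grounded copC) ?subrr ?mul0r //; [exact: in01_0 | right].
Qed.

Lemma cond_copula_cdf1 : h 1 = 1.
Proof. by rewrite /cond_copula_cdf divff // subr_eq0 gt_eqF. Qed.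

Lemma cond_copula_cdf_incr v w : (0 < d)%N -> 0 <= v -> v <= w -> w <= 1 ->
  0 <= h w - h v <= (1 - Cav C a 1)^-1 * (w - v).
Proof.
move=> d0 v0 vw w1.
have := Cav_nondecreasing copC d0 a01 v0 vw w1.
have := Cav_lipschitz copC a01 v0 vw w1.
have K0 : 0 < (1 - Cav C a 1)^-1 by rewrite invr_gt0 subr_gt0.
have -> : h w - h v = (w - v - (Cav C a w - Cav C a v)) * (1 - Cav C a 1)^-1.
  by rewrite /cond_copula_cdf; field; rewrite subr_eq0 gt_eqF.
move=> lip mono; apply/andP; split; nra.
Qed.

Lemma LTD1_cond_copula_cdf_le v : LTD1 C -> 0 < v -> v <= 1 -> h v <= v.
Proof.
move=> ltd v0 v1; have := ltd a a01 v 1 v0 v1 (lexx 1).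
rewrite divr1 ler_pdivlMr // => Cv.
by rewrite /cond_copula_cdf ler_pdivrMr ?subr_gt0 //; nra.
Qed.

End CondCopulaCdf.

Lemma ler_pdiv2 (p q r s : R) : 0 < q -> 0 < s -> (p / q <= r / s) = (p * s <= r * q).
Proof. by move=> q0 s0; rewrite ler_pdivrMr // mulrAC ler_pdivlMr. Qed.

Lemma l_alpha_cond_copula_cdf_le d (C1 C2 : ('I_d.+1 -> R) -> R) (a : 'I_d -> R) v :
  is_copula C1 -> is_copula C2 -> (forall k, in01 (a k)) ->
  Cav C1 a 1 < 1 -> Cav C2 a 1 < 1 -> l_alpha C1 C2 a 1 <= l_alpha C1 C2 a v ->
  0 < v < 1 -> cond_copula_cdf C2 a v <= cond_copula_cdf C1 a v.
Proof.
move=> copC1 copC2 a01 C1a1 C2a1 l1v /andP[v0 v1].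
have v01 : 0 <= v <= 1 by rewrite !ltW.
have C1v := Cav_le_id copC1 a01 v01; have C2v := Cav_le_id copC2 a01 v01.
move: l1v; rewrite /l_alpha /cond_copula_cdf.
have [->|C2vpos] := eqVneq (v - Cav C2 a v) 0.
  by rewrite mul0r divr_ge0 ?subr_ge0 // ltW.
have {}C2vpos : 0 < v - Cav C2 a v by rewrite lt_neqAle eq_sym C2vpos subr_ge0.
have q1 : 0 < 1 - Cav C1 a 1 by rewrite subr_gt0.
have q2 : 0 < 1 - Cav C2 a 1 by rewrite subr_gt0.
by rewrite !ler_pdiv2 // [(v - _) * (1 - Cav C1 a 1)]mulrC.
Qed.

End Copula.

Section ProbabilityFine.
Context d0 (T : measurableType d0) (R : realType) (P : probability T R).
Implicit Types S U : set T.

Lemma fine_measureDI S U : measurable S -> measurable U ->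
  fine (P S) = fine (P (S `\` U)) + fine (P (S `&` U)).
Proof.
move=> mS mU; have mSU := measurableI _ _ mS mU; have mSDU := measurableD mS mU.
by rewrite (measureDI P mS mU) fineD ?fin_num_measure.
Qed.

Lemma fine_probability_setC S : measurable S -> fine (P (~` S)) = 1 - fine (P S).
Proof. by move=> mS; rewrite probability_setC // fineB ?fin_num_measure. Qed.

Lemma fine_le_measure S U : measurable S -> measurable U -> S `<=` U ->
  fine (P S) <= fine (P U).
Proof.
by move=> mS mU SU; rewrite fine_le ?fin_num_measure // le_measure ?inE.
Qed.

End ProbabilityFine.

Section ConditionalCdf.
Context d0 (T : measurableType d0) (R : realType) (P : probability T R).
Variables (d : nat) (X : 'I_d -> {RV P >-> R}) (Y : {RV P >-> R}).
Variables (C : ('I_d.+1 -> R) -> R) (alpha : 'I_d -> R).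
Hypotheses (cX : forall i, continuous (Fdist (X i))) (copXY : copula_of X Y C).
Hypothesis alpha01 : forall i, 0 <= alpha i < 1.

Let alpha_in01 i : in01 (alpha i).
Proof. by case/andP: (alpha01 i) => a0 a1; rewrite /in01 a0 ltW. Qed.

Let Fdist_in01 (Z : {RV P >-> R}) y : in01 (Fdist Z y).
Proof. by rewrite /in01 Fdist_ge0 Fdist_le1. Qed.

Local Notation A := [set w | forall i, X i w <= VaR (X i) (alpha i)].
Local Notation B y := [set w | Y w <= y].

Lemma vevent_setT : (exists i, alpha i = 0) -> vevent X alpha = setT.
Proof.
move=> [i ai0]; apply/seteqP; split => // w _; exists i.
by rewrite ai0 /VaRE qinvE0 ?ltNyr // => x; exact: Fdist_ge0.
Qed.

Lemma VaR_continuousE i : 0 < alpha i ->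
  VaRE (X i) (alpha i) = (VaR (X i) (alpha i))%:E /\
  Fdist (X i) (VaR (X i) (alpha i)) = alpha i.
Proof.
move=> ai0; have ai01 : 0 < alpha i < 1 by case/andP: (alpha01 i) => _ ->; rewrite ai0.
by have [? ? _] := qinv_continuous_cdfP (Fdist_continuous_cdf (@cX i)) ai01.
Qed.

Lemma veventE : (forall i, 0 < alpha i) -> vevent X alpha = ~` A.
Proof.
move=> apos; apply/seteqP; split => w /=.
  by case=> i; rewrite (VaR_continuousE (apos i)).1 lte_fin => Xi /(_ i); lra.
move/existsNP => [i /negP]; rewrite -ltNge => Xi.
by exists i; rewrite (VaR_continuousE (apos i)).1 lte_fin.
Qed.

Lemma measurable_lower_orthant : measurable A.
Proof.
rewrite (_ : A = \bigcap_(i in [set: 'I_d]) [set w | X i w <= VaR (X i) (alpha i)]).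
  by apply: fin_bigcap_measurable => [|i _]; [exact: finite_finset | exact: measurable_RV_le].
by apply/seteqP; split => w /= Aw i; [move=> _; exact: Aw | exact: Aw i I].
Qed.

Lemma lower_orthant_joint y : (forall i, 0 < alpha i) ->
  fine (P (A `&` B y)) = Cav C alpha (Fdist Y y).
Proof.
move=> apos; rewrite (proj2 copXY) /=; congr Cav.
by apply: funext => i; rewrite (VaR_continuousE (apos i)).2.
Qed.

(* Squeeze [P A] between [C(alpha, F_Y y) -+ (1 - F_Y y)] and let [F_Y y -> 1]. *)
Lemma lower_orthant_prob : (0 < d)%N -> (forall i, 0 < alpha i) ->
  fine (P A) = Cav C alpha 1.
Proof.
move=> d_gt0 apos; have copC := proj1 copXY.
suff close e : 0 < e -> `|fine (P A) - Cav C alpha 1| <= e.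
  by apply/eqP; rewrite -subr_eq0 -normr_le0; apply/ler_addgt0Pr => e /close; rewrite add0r.
move=> e0; have e1 : 1 - e < 1 by lra.
have [y Fy] := Fdist_exists_gt Y e1.
case/andP: (Fdist_in01 Y y) => Fy0 Fy1.
have mB := measurable_RV_le Y y.
have PA := fine_measureDI P measurable_lower_orthant mB.
have ADB : fine (P (A `\` B y)) <= 1 - Fdist Y y.
  rewrite FdistE -fine_probability_setC //.
  apply: fine_le_measure => //; last exact: measurableC.
  exact: measurableD measurable_lower_orthant mB.
have ADB0 : 0 <= fine (P (A `\` B y)) by exact: fine_ge0.
have mono := Cav_nondecreasing copC d_gt0 alpha_in01 Fy0 Fy1 (lexx 1).
have lip := Cav_lipschitz copC alpha_in01 Fy0 Fy1 (lexx 1).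
rewrite lower_orthant_joint // in PA.
by rewrite ler_norml; apply/andP; split; lra.
Qed.

Lemma cond_cdfE : (0 < d)%N ->
  cond_cdf (vevent X alpha) Y = cond_copula_cdf C alpha \o Fdist Y.
Proof.
move=> d_gt0; have copC := proj1 copXY; apply: funext => y /=.
have [[i ai0]|apos] := pselect (exists i, alpha i = 0).
  rewrite /cond_cdf vevent_setT; last by exists i.
  have Ca0 v : in01 v -> Cav C alpha v = 0.
    by move=> v01; apply: (Cav_grounded copC) => //; left; exists i.
  by rewrite setIT probability_setT /cond_copula_cdf !Ca0 ?subr0 ?divr1 //; exact: in01_1.
have {}apos i : 0 < alpha i.
  rewrite lt_neqAle (proj1 (andP (alpha01 i))) andbT eq_sym.
  by apply/eqP => ai0; apply: apos; exists i.
rewrite /cond_cdf /cond_copula_cdf veventE // fine_probability_setC; last first.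
  exact: measurable_lower_orthant.
rewrite lower_orthant_prob //; congr (_ / _).
have := fine_measureDI P (measurable_RV_le Y y) measurable_lower_orthant.
by rewrite -FdistE setIC lower_orthant_joint // setDE => FE; lra.
Qed.

End ConditionalCdf.

Section QuantileOrders.
Variables (R : realType) (F1 F2 : R -> R) (b g1 g2 : R).
Hypotheses (cdf1 : continuous_cdf F1) (cdf2 : continuous_cdf F2).
Hypotheses (b01 : 0 < b < 1) (g101 : 0 < g1 < 1) (g201 : 0 < g2 < 1).
Hypotheses (g12 : g1 <= g2) (bg2 : b <= g2).

Lemma disp_le_quantile_increments : disp_le F1 F2 ->
  qinv F1 g1 - qinv F1 b <= qinv F2 g2 - qinv F2 b.
Proof.
move=> disp; case/andP: b01 g101 g201 => b0 b1 /andP[g10 g11] /andP[g20 g21].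
have Q2g := qinv_continuous_cdf_le cdf2 g10 g12 g21.
have Q2b := qinv_continuous_cdf_le cdf2 b0 bg2 g21.
have [bg1|/ltW g1b] := leP b g1.
  by have := disp b g1 b0 bg1 g11; lra.
by have := qinv_continuous_cdf_le cdf1 g10 g1b b1; lra.
Qed.

Lemma star_le_quantile_ratios : star_le F1 F2 ->
  (qinv F1 g1 - qinv F1 b) / qinv F1 b <= (qinv F2 g2 - qinv F2 b) / qinv F2 b.
Proof.
move=> [pos star]; case/andP: (b01) g101 g201 => b0 b1 /andP[g10 g11] /andP[g20 g21].
have [Q1b Q2b] := pos b b01; have [Q1g Q2g] := pos g1 g101.
have Q2g12 := qinv_continuous_cdf_le cdf2 g10 g12 g21.
have Q2bg2 := qinv_continuous_cdf_le cdf2 b0 bg2 g21.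
rewrite ler_pdiv2 //; have [bg1|/ltW g1b] := leP b g1.
  by have := star b g1 b0 bg1 g11; rewrite ler_pdiv2 //; nra.
by have := qinv_continuous_cdf_le cdf1 g10 g1b b1; nra.
Qed.

End QuantileOrders.

Lemma VCoVaR_level d0 (T : measurableType d0) (R : realType) (P : probability T R)
    (d : nat) (X : 'I_d -> {RV P >-> R}) (Y : {RV P >-> R})
    (C : ('I_d.+1 -> R) -> R) (alpha : 'I_d -> R) (beta : R) :
  (0 < d)%N -> (forall i, continuous (Fdist (X i))) -> continuous (Fdist Y) ->
  copula_of X Y C -> (forall i, 0 <= alpha i < 1) -> Cav C alpha 1 < 1 ->
  0 < beta < 1 ->
  exists g, [/\ 0 < g < 1, cond_copula_cdf C alpha g = beta,
    VCoVaR X Y alpha beta = qinv (Fdist Y) g &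
    forall v, 0 < v < 1 -> beta <= cond_copula_cdf C alpha v -> g <= v].
Proof.
move=> d_gt0 cX cY copXY alpha01 Ca1 b01; have copC := proj1 copXY.
have a01 i : in01 (alpha i) by case/andP: (alpha01 i) => a0 a1; rewrite /in01 a0 ltW.
rewrite /VCoVaR (cond_cdfE cX copXY alpha01 d_gt0).
apply: (qinv_comp (K := (1 - Cav C alpha 1)^-1)) => //.
- by rewrite invr_gt0 subr_gt0.
- exact: cond_copula_cdf0.
- exact: cond_copula_cdf1.
- by move=> v w v0 vw w1; apply: cond_copula_cdf_incr.
- exact: Fdist_continuous_cdf.
Qed.

Unset Implicit Arguments.

Theorem theorem4p2 (R : realType) (d : nat) (hd : (1 <= d)%N)
  (d1 : measure_display) (T1 : measurableType d1) (P1 : probability T1 R)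
  (X1 : 'I_d -> {RV P1 >-> R}) (Y1 : {RV P1 >-> R})
  (d2 : measure_display) (T2 : measurableType d2) (P2 : probability T2 R)
  (X2 : 'I_d -> {RV P2 >-> R}) (Y2 : {RV P2 >-> R})
  (C1 C2 : ('I_d.+1 -> R) -> R) (alpha : 'I_d -> R) :
  (forall i, continuous (Fdist (X1 i))) -> continuous (Fdist Y1) ->
  (forall i, continuous (Fdist (X2 i))) -> continuous (Fdist Y2) ->
  copula_of X1 Y1 C1 -> copula_of X2 Y2 C2 ->
  (forall i, 0 <= alpha i < 1) ->
  Cav C1 alpha 1 < 1 -> Cav C2 alpha 1 < 1 ->
  (LTD1 C1 \/ LTD1 C2) ->
  (forall v : R, 0 < v <= 1 -> l_alpha C1 C2 alpha 1 <= l_alpha C1 C2 alpha v) ->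
  (disp_le (Fdist Y1) (Fdist Y2) ->
     forall beta : R, 0 < beta < 1 ->
       DVCoVaR X1 Y1 alpha beta <= DVCoVaR X2 Y2 alpha beta) /\
  (star_le (Fdist Y1) (Fdist Y2) ->
     forall beta : R, 0 < beta < 1 ->
       DRVCoVaR X1 Y1 alpha beta <= DRVCoVaR X2 Y2 alpha beta).
Proof.
move=> cX1 cY1 cX2 cY2 cop1 cop2 alpha01 C1a1 C2a1 ltd l_ge.
have a01 i : in01 (alpha i) by case/andP: (alpha01 i) => a0 a1; rewrite /in01 a0 ltW.
suff levels beta : 0 < beta < 1 -> exists g1 g2,
    [/\ 0 < g1 < 1, 0 < g2 < 1, g1 <= g2, beta <= g2 &
      VCoVaR X1 Y1 alpha beta = qinv (Fdist Y1) g1 /\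
      VCoVaR X2 Y2 alpha beta = qinv (Fdist Y2) g2].
  have cdf1 := Fdist_continuous_cdf cY1; have cdf2 := Fdist_continuous_cdf cY2.
  split=> [disp|star] beta b01;
    have [g1 [g2 [g101 g201 g12 bg2 [E1 E2]]]] := levels beta b01.
  - by rewrite /DVCoVaR /VaR E1 E2; exact: disp_le_quantile_increments.
  - by rewrite /DRVCoVaR /DVCoVaR /VaR E1 E2; exact: star_le_quantile_ratios.
move=> b01.
have [g1 [g101 h1g1 E1 g1_min]] := VCoVaR_level hd cX1 cY1 cop1 alpha01 C1a1 b01.
have [g2 [g201 h2g2 E2 _]] := VCoVaR_level hd cX2 cY2 cop2 alpha01 C2a1 b01.
have g12 : g1 <= g2.
  apply: g1_min => //; rewrite -h2g2.
  apply: (l_alpha_cond_copula_cdf_le (proj1 cop1) (proj1 cop2) a01 C1a1 C2a1 _ g201).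
  by apply: l_ge; case/andP: g201 => g20 g21; rewrite g20 ltW.
exists g1, g2; split => //.
case/andP: g101 g201 => g10 /ltW g11 /andP[g20 /ltW g21].
by case: ltd => ltd; [apply: le_trans g12; rewrite -h1g1 | rewrite -h2g2];
  exact: LTD1_cond_copula_cdf_le.
Qed.
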